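(* For every finite set $S\subset\mathbb{R}^2$ in general position, the exit graph of $S$ is supporting for $S$.
   Context: General position: no three points collinear. Two labeled point sets in general position have the same order type under a bijection $\varphi$ if every triple $(p,q,r)$ of distinct points has the same orientation (clockwise or counterclockwise) as $(\varphi(p),\varphi(q),\varphi(r))$. A geometric graph on $S$ is a graph with vertex set $S$ whose edges are drawn as straight segments between their endpoints. An ambient isotopy of $\mathbb{R}^2$ is a continuous map $f:\mathbb{R}^2\times[0,1]\to\mathbb{R}^2$ with $f(\cdot,t)$ a homeomorphism for every $t$ and $f(\cdot,0)$ the identity. A geometric graph $G$ on $S$ is supporting for $S$ if every ambient isotopy $f$ such that for every $t\in[0,1]$ the image under $f(\cdot,t)$ of each edge of $G$ is a straight segment and no four points of $f(S,t)$ are collinear, preserves the order type, i.e. for each $t$ with $f(S,t)$ in general position, $f(S,t)$ has the same order type as $S$ under $s\mapsto f(s,t)$. For distinct $a,b,c\in S$, $ab$ is an exit edge with witness $c$ if there is no $p\in S$ such that the line through $a$ and $p$ strictly separates $b$ from $c$, and no $p\in S$ such that the line through $b$ and $p$ strictly separates $a$ from $c$; $ab$ is an exit edge if it has some witness. The exit graph of $S$ is the geometric graph on $S$ whose edges are the exit edges. *)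

From Stdlib Require Import Reals List.
Open Scope R_scope.

Definition pt := (R * R)%type.

(* Orientation determinant: > 0 counterclockwise, < 0 clockwise, = 0 collinear. *)
Definition orient (p q r : pt) : R :=
  (fst q - fst p) * (snd r - snd p) - (snd q - snd p) * (fst r - fst p).

Definition general_position (S : list pt) : Prop :=
  forall p q r, In p S -> In q S -> In r S ->
    p <> q -> q <> r -> p <> r -> orient p q r <> 0.

Definition collinear4 (p1 p2 p3 p4 : pt) : Prop :=
  orient p1 p2 p3 = 0 /\ orient p1 p2 p4 = 0 /\
  orient p1 p3 p4 = 0 /\ orient p2 p3 p4 = 0.

Definition no_four_collinear (S : list pt) : Prop :=
  forall p1 p2 p3 p4, In p1 S -> In p2 S -> In p3 S -> In p4 S ->
    p1 <> p2 -> p1 <> p3 -> p1 <> p4 -> p2 <> p3 -> p2 <> p4 -> p3 <> p4 ->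
    ~ collinear4 p1 p2 p3 p4.

Definition strictly_separates (a p b c : pt) : Prop :=
  a <> p /\ orient a p b * orient a p c < 0.

Definition exit_edge_with (S : list pt) (a b c : pt) : Prop :=
  In a S /\ In b S /\ In c S /\ a <> b /\ b <> c /\ a <> c /\
  (~ exists p, In p S /\ strictly_separates a p b c) /\
  (~ exists p, In p S /\ strictly_separates b p a c).

Definition exit_edge (S : list pt) (a b : pt) : Prop :=
  exists c, exit_edge_with S a b c.

Definition dist2 (x y : pt) : R :=
  sqrt ((fst x - fst y) ^ 2 + (snd x - snd y) ^ 2).

Definition continuous2 (g : pt -> pt) : Prop :=
  forall x eps, 0 < eps -> exists delta, 0 < delta /\
    forall y, dist2 x y < delta -> dist2 (g x) (g y) < eps.

Definition homeomorphism2 (g : pt -> pt) : Prop :=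
  exists h : pt -> pt,
    (forall x, h (g x) = x) /\ (forall y, g (h y) = y) /\
    continuous2 g /\ continuous2 h.

(* Ambient isotopy f : R^2 x [0,1] -> R^2 (values for t outside [0,1] irrelevant). *)
Definition ambient_isotopy (f : pt -> R -> pt) : Prop :=
  (forall x t, 0 <= t <= 1 -> forall eps, 0 < eps -> exists delta, 0 < delta /\
     forall y s, 0 <= s <= 1 -> dist2 x y < delta -> Rabs (t - s) < delta ->
       dist2 (f x t) (f y s) < eps) /\
  (forall t, 0 <= t <= 1 -> homeomorphism2 (fun x => f x t)) /\
  (forall x, f x 0 = x).

Definition segment (u v : pt) (z : pt) : Prop :=
  exists l, 0 <= l <= 1 /\
    z = ((1 - l) * fst u + l * fst v, (1 - l) * snd u + l * snd v).

Definition maps_segment_to_segment (g : pt -> pt) (a b : pt) : Prop :=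
  exists u v, forall z, (exists y, segment a b y /\ z = g y) <-> segment u v z.

Definition same_order_type (S : list pt) (g : pt -> pt) : Prop :=
  forall p q r, In p S -> In q S -> In r S ->
    p <> q -> q <> r -> p <> r -> orient p q r * orient (g p) (g q) (g r) > 0.

Definition supporting (S : list pt) (E : pt -> pt -> Prop) : Prop :=
  forall f : pt -> R -> pt,
    ambient_isotopy f ->
    (forall t, 0 <= t <= 1 -> forall a b, In a S -> In b S -> E a b ->
       maps_segment_to_segment (fun x => f x t) a b) ->
    (forall t, 0 <= t <= 1 -> no_four_collinear (map (fun s => f s t) S)) ->
    forall t, 0 <= t <= 1 ->
      general_position (map (fun s => f s t) S) ->
      same_order_type S (fun s => f s t).

From Stdlib Require Import Reals List Lra Psatz Classical FunctionalExtensionality.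
Open Scope R_scope.

(* Suppose an admissible isotopy [f] changes the order type of [S] by time
   [t1].  The orientation margin M(t) = min over distinct triples (p,q,r) of
   orient(f p t, f q t, f r t) * orient(p,q,r) is continuous, positive at 0
   and nonpositive at [t1]; by the intermediate value theorem it vanishes at
   some [ts].  Then [g = f(., ts)] weakly preserves all orientations but
   flattens a triple, with [g b] strictly between [g a] and [g c].  If some
   [p] in S separates [b] from [c] as seen from [a] (or from [c]), weak
   preservation puts [g p] on the same line: four collinear image points.
   Otherwise [ac] is an exit edge with witness [b]; its image is a segment
   containing [g b], so by injectivity [b] lies on segment [ac], against
   general position. *)

Lemma Rmin_abs (a b : R) : Rmin a b = (a + b - Rabs (a - b)) * / 2.
Proof. unfold Rmin; destruct Rle_dec; unfold Rabs; destruct Rcase_abs; lra. Qed.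

Lemma continuity_pt_Rmin (f1 f2 : R -> R) (x : R) :
  continuity_pt f1 x -> continuity_pt f2 x ->
  continuity_pt (fun t => Rmin (f1 t) (f2 t)) x.
Proof.
  intros H1 H2.
  assert (E : (fun t => Rmin (f1 t) (f2 t))
              = (fun t => (f1 t + f2 t - Rabs (f1 t - f2 t)) * / 2)).
  { extensionality t. apply Rmin_abs. }
  rewrite E. apply continuity_pt_mult.
  - apply continuity_pt_minus; [apply continuity_pt_plus; assumption|].
    apply (continuity_pt_comp (fun t => f1 t - f2 t) Rabs).
    + apply continuity_pt_minus; assumption.
    + apply Rcontinuity_abs.
  - apply continuity_pt_const; intros u v; reflexivity.
Qed.

(* Projection of the real line onto the time interval [0,1]; composing with
   it turns the isotopy into a map defined and continuous for all times. *)
Definition clamp (t : R) : R := Rmax 0 (Rmin 1 t).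

Lemma clamp_range (t : R) : 0 <= clamp t <= 1.
Proof. unfold clamp, Rmax, Rmin; repeat destruct Rle_dec; lra. Qed.

Lemma clamp_id (t : R) : 0 <= t <= 1 -> clamp t = t.
Proof. intros; unfold clamp, Rmax, Rmin; repeat destruct Rle_dec; lra. Qed.

Lemma clamp_lipschitz (s t : R) : Rabs (clamp s - clamp t) <= Rabs (s - t).
Proof.
  unfold clamp, Rmax, Rmin; repeat destruct Rle_dec; unfold Rabs;
    repeat destruct Rcase_abs; lra.
Qed.

Lemma fst_lipschitz (a b : pt) : Rabs (fst a - fst b) <= dist2 a b.
Proof.
  unfold dist2. rewrite <- sqrt_Rsqr_abs. apply sqrt_le_1_alt. unfold Rsqr.
  pose proof (pow2_ge_0 (snd a - snd b)). nra.
Qed.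

Lemma snd_lipschitz (a b : pt) : Rabs (snd a - snd b) <= dist2 a b.
Proof.
  unfold dist2. rewrite <- sqrt_Rsqr_abs. apply sqrt_le_1_alt. unfold Rsqr.
  pose proof (pow2_ge_0 (fst a - fst b)). nra.
Qed.

Lemma dist2_refl (a : pt) : dist2 a a = 0.
Proof.
  unfold dist2. rewrite !Rminus_diag.
  replace (0 ^ 2 + 0 ^ 2) with 0 by ring. apply sqrt_0.
Qed.

Lemma isotopy_reading_continuous (f : pt -> R -> pt) (x : pt) (pr : pt -> R) :
  ambient_isotopy f ->
  (forall a b, Rabs (pr a - pr b) <= dist2 a b) ->
  continuity (fun t => pr (f x (clamp t))).
Proof.
  intros [Hcont _] Hpr t0 eps Heps.
  destruct (Hcont x (clamp t0) (clamp_range t0) eps Heps) as [d [Hd Hclose]].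
  exists d. split; [lra|]. intros t [_ Ht]. simpl in *. unfold R_dist in *.
  rewrite Rabs_minus_sym.
  eapply Rle_lt_trans; [apply Hpr|]. apply Hclose.
  - apply clamp_range.
  - rewrite dist2_refl; lra.
  - eapply Rle_lt_trans; [apply clamp_lipschitz|]. rewrite Rabs_minus_sym. exact Ht.
Qed.

Lemma isotopy_orient_continuous (f : pt -> R -> pt) (p q r : pt) :
  ambient_isotopy f ->
  continuity (fun t => orient (f p (clamp t)) (f q (clamp t)) (f r (clamp t))).
Proof.
  intros HI t0. unfold orient.
  pose proof (fun x => isotopy_reading_continuous f x fst HI fst_lipschitz t0).
  pose proof (fun x => isotopy_reading_continuous f x snd HI snd_lipschitz t0).
  repeat (apply continuity_pt_minus || apply continuity_pt_mult); auto.
Qed.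

Lemma isotopy_injective (f : pt -> R -> pt) (t : R) :
  ambient_isotopy f -> 0 <= t <= 1 -> forall x y, f x t = f y t -> x = y.
Proof.
  intros [_ [Hhomeo _]] Ht x y E.
  destruct (Hhomeo t Ht) as [h [Hh _]].
  rewrite <- (Hh x), <- (Hh y). simpl. rewrite E. reflexivity.
Qed.

Definition pt_eq_dec (a b : pt) : {a = b} + {a <> b}.
Proof.
  destruct a as [a1 a2], b as [b1 b2].
  destruct (Req_dec_T a1 b1) as [e1|n1]; [destruct (Req_dec_T a2 b2) as [e2|n2]|].
  - left; subst; reflexivity.
  - right; intro H; inversion H; auto.
  - right; intro H; inversion H; auto.
Defined.

Definition minl (l : list R) : R := fold_right Rmin 1 l.

Lemma minl_le (l : list R) (x : R) : In x l -> minl l <= x.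
Proof.
  induction l as [|y l IH]; simpl; intros H; [contradiction|].
  destruct H as [<-|H]; [apply Rmin_l|].
  eapply Rle_trans; [apply Rmin_r|auto].
Qed.

Lemma minl_attained (l : list R) : minl l = 1 \/ exists x, In x l /\ minl l = x.
Proof.
  unfold minl. induction l as [|y l IH]; simpl; [left; reflexivity|].
  destruct (Rle_lt_dec y (fold_right Rmin 1 l)) as [Hy|Hy].
  - rewrite Rmin_left by exact Hy. right; exists y; auto.
  - rewrite Rmin_right by lra.
    destruct IH as [H|[x [Hx H]]]; [left; exact H|right; exists x; auto].
Qed.

Lemma minl_continuous {A : Type} (L : list A) (F : A -> R -> R) :
  (forall a, continuity (F a)) -> continuity (fun t => minl (map (fun a => F a t) L)).
Proof.
  intros H t0. induction L as [|a L IH]; simpl.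
  - apply continuity_pt_const; intros u v; reflexivity.
  - apply continuity_pt_Rmin; [apply H|exact IH].
Qed.

Definition triple_margin (g : pt -> pt) (tr : pt * (pt * pt)) : R :=
  let '(p, (q, r)) := tr in
  if pt_eq_dec p q then 1 else if pt_eq_dec q r then 1 else if pt_eq_dec p r then 1
  else orient (g p) (g q) (g r) * orient p q r.

Definition triples (S : list pt) : list (pt * (pt * pt)) := list_prod S (list_prod S S).

Definition margin (S : list pt) (g : pt -> pt) : R :=
  minl (map (triple_margin g) (triples S)).

Lemma in_triples (S : list pt) (a b c : pt) :
  In (a, (b, c)) (triples S) <-> In a S /\ In b S /\ In c S.
Proof. unfold triples. rewrite !in_prod_iff. tauto. Qed.

Lemma margin_le (S : list pt) (g : pt -> pt) (a b c : pt) :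
  In a S -> In b S -> In c S -> a <> b -> b <> c -> a <> c ->
  margin S g <= orient (g a) (g b) (g c) * orient a b c.
Proof.
  intros Ha Hb Hc ab bc ac.
  assert (Hin : In (a, (b, c)) (triples S)) by (apply in_triples; auto).
  eapply Rle_trans; [apply minl_le, in_map, Hin|]. simpl.
  destruct (pt_eq_dec a b); [contradiction|].
  destruct (pt_eq_dec b c); [contradiction|].
  destruct (pt_eq_dec a c); [contradiction|]. lra.
Qed.

Lemma margin_attained (S : list pt) (g : pt -> pt) :
  margin S g = 1 \/
  exists a b c, In a S /\ In b S /\ In c S /\ a <> b /\ b <> c /\ a <> c /\
    margin S g = orient (g a) (g b) (g c) * orient a b c.
Proof.
  destruct (minl_attained (map (triple_margin g) (triples S))) as [E|[x [Hx E]]];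
    [left; exact E|].
  apply in_map_iff in Hx as [[a [b c]] [<- Hin]].
  apply in_triples in Hin as [Ha [Hb Hc]].
  unfold margin. rewrite E. simpl.
  destruct (pt_eq_dec a b); [left; reflexivity|].
  destruct (pt_eq_dec b c); [left; reflexivity|].
  destruct (pt_eq_dec a c); [left; reflexivity|].
  right. exists a, b, c. repeat split; auto.
Qed.

Lemma margin_id_pos (S : list pt) : general_position S -> 0 < margin S (fun x => x).
Proof.
  intros GP.
  destruct (margin_attained S (fun x => x))
    as [E|[a [b [c [Ha [Hb [Hc [ab [bc [ac E]]]]]]]]]]; rewrite E; [lra|].
  apply Rsqr_pos_lt. exact (GP a b c Ha Hb Hc ab bc ac).
Qed.

Lemma margin_continuous (S : list pt) (f : pt -> R -> pt) :
  ambient_isotopy f -> continuity (fun t => margin S (fun x => f x (clamp t))).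
Proof.
  intros HI. apply (minl_continuous _ (fun tr t => triple_margin (fun x => f x (clamp t)) tr)).
  intros [p [q r]]. unfold triple_margin.
  destruct (pt_eq_dec p q); [apply continuity_const; intros u v; reflexivity|].
  destruct (pt_eq_dec q r); [apply continuity_const; intros u v; reflexivity|].
  destruct (pt_eq_dec p r); [apply continuity_const; intros u v; reflexivity|].
  apply continuity_mult; [apply isotopy_orient_continuous; exact HI|].
  apply continuity_const; intros u v; reflexivity.
Qed.

Definition weakly_preserves (S : list pt) (g : pt -> pt) : Prop :=
  forall p q r, In p S -> In q S -> In r S -> p <> q -> q <> r -> p <> r ->
    0 <= orient (g p) (g q) (g r) * orient p q r.

Lemma margin_zero_spec (S : list pt) (g : pt -> pt) :
  margin S g = 0 ->
  weakly_preserves S g /\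
  exists a b c, In a S /\ In b S /\ In c S /\ a <> b /\ b <> c /\ a <> c /\
    orient (g a) (g b) (g c) * orient a b c = 0.
Proof.
  intros M0. split.
  - intros p q r Hp Hq Hr pq qr pr. rewrite <- M0. apply margin_le; auto.
  - destruct (margin_attained S g) as [E|[a [b [c H]]]]; [lra|].
    exists a, b, c. rewrite <- M0. intuition.
Qed.

Definition comb (x z : pt) (l : R) : pt :=
  ((1 - l) * fst x + l * fst z, (1 - l) * snd x + l * snd z).

Lemma collinear_param (x y z : pt) :
  x <> z -> orient x y z = 0 -> exists mu, y = comb x z mu.
Proof.
  destruct x as [x1 x2], y as [y1 y2], z as [z1 z2]; unfold orient, comb; simpl.
  intros Hxz Ho.
  destruct (Req_dec_T z1 x1) as [e|n].
  - assert (z2 <> x2) by (intro; apply Hxz; subst; reflexivity).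
    subst z1. exists ((y2 - x2) / (z2 - x2)).
    assert (Hy1 : (y1 - x1) * (z2 - x2) = 0) by lra.
    apply Rmult_integral in Hy1 as [Hy1|Hy1]; [|lra].
    f_equal; [lra|field; lra].
  - exists ((y1 - x1) / (z1 - x1)). f_equal; [field; lra|].
    apply Rmult_eq_reg_l with (z1 - x1); [|lra].
    replace ((z1 - x1) * ((1 - (y1 - x1) / (z1 - x1)) * x2 + (y1 - x1) / (z1 - x1) * z2))
      with ((z1 - x1) * x2 + (y1 - x1) * (z2 - x2)) by (field; lra).
    lra.
Qed.

Lemma collinear_between (x y z : pt) :
  x <> y -> y <> z -> x <> z -> orient x y z = 0 ->
  (exists l, 0 < l < 1 /\ y = comb x z l) \/
  (exists l, 0 < l < 1 /\ x = comb y z l) \/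
  (exists l, 0 < l < 1 /\ z = comb x y l).
Proof.
  intros Hxy Hyz Hxz Ho.
  destruct (collinear_param x y z Hxz Ho) as [mu ->].
  destruct x as [x1 x2], z as [z1 z2]; unfold comb in *; simpl in *.
  assert (mu <> 0) by (intro; subst mu; apply Hxy; f_equal; ring).
  assert (mu <> 1) by (intro; subst mu; apply Hyz; f_equal; ring).
  destruct (Rlt_le_dec mu 0) as [Hneg|Hnneg].
  - right; left. exists (mu / (mu - 1)). split.
    + split; [apply Rdiv_neg_neg; lra|].
      apply Rmult_lt_reg_r with (1 - mu); [lra|].
      replace (mu / (mu - 1) * (1 - mu)) with (- mu) by (field; lra). lra.
    + f_equal; field; lra.
  - destruct (Rlt_le_dec mu 1) as [Hlt|Hge].
    + left. exists mu. split; [lra|reflexivity].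
    + right; right. exists (/ mu). split.
      * split; [apply Rinv_0_lt_compat; lra|].
        rewrite <- Rinv_1. apply Rinv_lt_contravar; lra.
      * f_equal; field; lra.
Qed.

Lemma orient_comb (A P C : pt) (l : R) : orient A P (comb A C l) = l * orient A P C.
Proof. unfold orient, comb; simpl; ring. Qed.

Lemma collinear4_comb (A C P : pt) (l : R) :
  orient A P C = 0 -> collinear4 A C P (comb A C l).
Proof.
  intros H. unfold collinear4.
  replace (orient A C P) with (- orient A P C) by (unfold orient; ring).
  replace (orient A C (comb A C l)) with 0 by (unfold orient, comb; simpl; ring).
  rewrite orient_comb.
  replace (orient C P (comb A C l)) with (- (1 - l) * orient A P C)
    by (unfold orient, comb; simpl; ring).
  rewrite H. repeat split; ring.
Qed.

Lemma segment_convex (u v z1 z2 : pt) (l : R) :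
  segment u v z1 -> segment u v z2 -> 0 <= l <= 1 -> segment u v (comb z1 z2 l).
Proof.
  intros [l1 [H1 ->]] [l2 [H2 ->]] Hl. exists ((1 - l) * l1 + l * l2). split.
  - split; nra.
  - unfold comb; simpl; f_equal; ring.
Qed.

Lemma segment_source (a b : pt) : segment a b a.
Proof. exists 0. split; [lra|]. destruct a; simpl; f_equal; ring. Qed.

Lemma segment_target (a b : pt) : segment a b b.
Proof. exists 1. split; [lra|]. destruct b; simpl; f_equal; ring. Qed.

Section Rigidity.

Variables (S : list pt) (g : pt -> pt).
Hypothesis g_inj : forall x y, g x = g y -> x = y.
Hypothesis g_weak : weakly_preserves S g.
Hypothesis g_no4 : no_four_collinear (map g S).

(* If [g b] lies strictly between [g a] and [g c], no line [ap] (p in S)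
   strictly separates [c] from [b]: otherwise [g p] would be on line
   [g a, g c] as well. *)
Lemma separator_contradiction (a b c p : pt) (l : R) :
  In a S -> In b S -> In c S -> In p S ->
  a <> b -> b <> c -> a <> c ->
  0 < l < 1 -> g b = comb (g a) (g c) l ->
  strictly_separates a p c b -> False.
Proof.
  intros Ha Hb Hc Hp ab bc ac Hl Hgb [ap Hsep].
  assert (pc : p <> c) by (intro; subst p; unfold orient in Hsep; nra).
  assert (pb : p <> b) by (intro; subst p; unfold orient in Hsep; nra).
  pose proof (g_weak a p c Ha Hp Hc ap pc ac) as Hpc.
  pose proof (g_weak a p b Ha Hp Hb ap pb ab) as Hpb.
  rewrite Hgb, orient_comb in Hpb.
  set (x := orient (g a) (g p) (g c)) in *.
  assert (Hsq : x * x * (l * (orient a p c * orient a p b)) >= 0).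
  { replace (x * x * (l * (orient a p c * orient a p b)))
      with ((x * orient a p c) * (l * x * orient a p b)) by ring.
    apply Rle_ge, Rmult_le_pos; assumption. }
  assert (Hflat : x = 0).
  { assert (l * (orient a p c * orient a p b) < 0) by nra.
    destruct (Req_dec_T x 0) as [|Hx]; [assumption|].
    pose proof (Rsqr_pos_lt x Hx). unfold Rsqr in *. nra. }
  apply (g_no4 (g a) (g c) (g p) (g b)); try apply in_map; auto;
    try (intro E; apply g_inj in E; congruence).
  rewrite Hgb. apply collinear4_comb. exact Hflat.
Qed.

Hypothesis S_gp : general_position S.
Hypothesis g_exit : forall a b, In a S -> In b S -> exit_edge S a b ->
  maps_segment_to_segment g a b.

Lemma no_image_between (a b c : pt) (l : R) :
  In a S -> In b S -> In c S -> a <> b -> b <> c -> a <> c ->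
  0 < l < 1 -> g b = comb (g a) (g c) l -> False.
Proof.
  intros Ha Hb Hc ab bc ac Hl Hgb.
  destruct (classic (exists p, In p S /\ strictly_separates a p c b))
    as [[p [Hp Hsep]]|No_a].
  { exact (separator_contradiction a b c p l Ha Hb Hc Hp ab bc ac Hl Hgb Hsep). }
  destruct (classic (exists p, In p S /\ strictly_separates c p a b))
    as [[p [Hp Hsep]]|No_c].
  { apply (separator_contradiction c b a p (1 - l) Hc Hb Ha Hp); auto; [lra|].
    rewrite Hgb; unfold comb; f_equal; ring. }
  assert (Hexit : exit_edge S a c) by (exists b; repeat split; auto).
  destruct (g_exit a c Ha Hc Hexit) as [u [v Hseg]].
  assert (Sa : segment u v (g a)) by (apply Hseg; exists a; split; [apply segment_source|auto]).
  assert (Sc : segment u v (g c)) by (apply Hseg; exists c; split; [apply segment_target|auto]).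
  assert (Sb : segment u v (g b)) by (rewrite Hgb; apply segment_convex; auto; lra).
  apply Hseg in Sb as [y [[m [_ Ey]] Eb]].
  apply g_inj in Eb. rewrite <- Eb in Ey.
  apply (S_gp a b c Ha Hb Hc ab bc ac). rewrite Ey. unfold orient; simpl; ring.
Qed.

Lemma image_general_position (a b c : pt) :
  In a S -> In b S -> In c S -> a <> b -> b <> c -> a <> c ->
  orient (g a) (g b) (g c) <> 0.
Proof.
  intros Ha Hb Hc ab bc ac Hflat.
  assert (gab : g a <> g b) by (intro E; apply g_inj in E; contradiction).
  assert (gbc : g b <> g c) by (intro E; apply g_inj in E; contradiction).
  assert (gac : g a <> g c) by (intro E; apply g_inj in E; contradiction).
  destruct (collinear_between (g a) (g b) (g c) gab gbc gac Hflat)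
    as [[l [Hl Hm]]|[[l [Hl Hm]]|[l [Hl Hm]]]].
  - exact (no_image_between a b c l Ha Hb Hc ab bc ac Hl Hm).
  - exact (no_image_between b a c l Hb Ha Hc (not_eq_sym ab) ac bc Hl Hm).
  - exact (no_image_between a c b l Ha Hc Hb ac (not_eq_sym bc) ab Hl Hm).
Qed.

End Rigidity.

Theorem mainTheorem5 (S : list pt) :
  NoDup S -> general_position S -> supporting S (exit_edge S).
Proof.
  intros _ GP f HI Hedge H4 t1 Ht1 _ p q r Hp Hq Hr pq qr pr.
  apply Rnot_le_lt; intro Hflip.
  set (M := fun t => margin S (fun x => f x (clamp t))).
  assert (M_start : 0 < M 0).
  { unfold M. rewrite clamp_id by lra.
    rewrite (functional_extensionality _ _ (proj2 (proj2 HI))).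
    apply margin_id_pos, GP. }
  assert (M_t1 : M t1 <= 0).
  { unfold M. rewrite clamp_id by exact Ht1.
    eapply Rle_trans; [apply (margin_le S _ p q r); assumption|].
    rewrite Rmult_comm. exact Hflip. }
  destruct (IVT_cor M 0 t1 (margin_continuous S f HI)) as [ts [Hts M_ts]];
    [lra|nra|].
  assert (Hts01 : 0 <= ts <= 1) by lra.
  unfold M in M_ts. rewrite clamp_id in M_ts by exact Hts01.
  destruct (margin_zero_spec S _ M_ts)
    as [Hweak [a [b [c [Ha [Hb [Hc [ab [bc [ac Hzero]]]]]]]]]].
  apply Rmult_integral in Hzero as [Hzero|Hzero].
  - exact (image_general_position S (fun x => f x ts)
             (isotopy_injective f ts HI Hts01) Hweak (H4 ts Hts01) GP
             (fun a b Ha Hb Hab => Hedge ts Hts01 a b Ha Hb Hab)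
             a b c Ha Hb Hc ab bc ac Hzero).
  - exact (GP a b c Ha Hb Hc ab bc ac Hzero).
Qed.
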